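(* Let $n\in\mathbf{N}$ and let $A\subset[n]$ have property P. If $\left|A\cap\left(\frac{2n}{3},n\right]\right|\geqslant\frac{2n}{9}+\frac43$, then $|A|\leqslant\left\lceil\frac n3\right\rceil$.
   Context: A set $A\subset\mathbf{N}$ has property P if there are no $x,y,z\in A$ (not necessarily distinct $x,y$) with $z<x$, $z<y$ and $z\mid x+y$. $(\alpha,\beta]$ denotes the set of integers $m$ with $\alpha<m\le\beta$. *)

From mathcomp Require Import all_boot.
Set Implicit Arguments. Unset Strict Implicit. Unset Printing Implicit Defensive.

Definition propP (A : pred nat) : Prop :=
  ~ exists x y z, [/\ A x && A y, A z, z < x, z < y & z %| x + y].

(* [n] = {1, ..., n}, represented inside 'I_n.+1 = {0..n}; A \subset [n]
   means additionally 0 \notin A. *)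
Definition subset_range (n : nat) (A : {set 'I_n.+1}) : Prop :=
  forall i : 'I_n.+1, i \in A -> 0 < val i.

Definition natpred (n : nat) (A : {set 'I_n.+1}) : pred nat :=
  fun m => [exists i : 'I_n.+1, (i \in A) && (val i == m)].

From mathcomp Require Import all_boot zify.

(* Let t = floor(2n/3), so that (2n/3, n] = (t, n] has n - t = ceil(n/3)
   elements, let B = A ∩ (t, n], k = |B|, and z = min A.  If z > t then
   A ⊆ (t, n] and |A| <= n - t.  Otherwise property P says that z divides no
   sum x + y of elements x, y > z of A, and three counting bounds follow:
   1. a window of z consecutive integers contains at most floor((z-1)/2)
      elements of A above z (their residues mod z avoid 0, z/2 and each
      other's complements), so |A| <= 1 + floor((z-1)/2) + (n - 2z);
   2. likewise k <= floor((z-1)/2) + (n - t - z);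
   3. for every multiple m of z, B avoids every pair {x, m - x}, so k is at
      most n - t minus the number of such pairs inside (t, n].
   If bound 1 is at most n - t we are done; otherwise bound 2, the hypothesis
   9k >= 2n + 12 and bound 3 for a well-chosen multiple m of z are
   arithmetically contradictory.  The file first proves the counting tools
   (injections into initial segments, slices S ∩ (a, b] of a set of
   ordinals, the window and pair bounds), then specializes them to a set
   lying above a non-dividing minimum, and finally derives the theorem. *)

Lemma card_le_injection (T : finType) (S : {pred T}) (f : T -> nat) (K : nat) :
  {in S &, injective f} -> {in S, forall x, f x < K} -> #|S| <= K.
Proof.
move=> f_inj f_lt; rewrite -(size_image f) -(size_iota 0 K).
apply: uniq_leq_size.
  by rewrite map_inj_in_uniq ?enum_uniq // => x y; rewrite !mem_enum; exact: f_inj.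
by move=> _ /imageP [x xS ->]; rewrite mem_iota /= add0n f_lt.
Qed.

Lemma eq_mod_window {a z x y : nat} :
  a < x <= a + z -> a < y <= a + z -> x = y %[mod z] -> x = y.
Proof.
wlog le_xy : x y / x <= y => [hwlog|] hx hy exy.
  by case: (leqP x y) => [|/ltnW] le; [|symmetry]; apply: hwlog.
apply/eqP; rewrite eqn_leq le_xy /= leqNgt; apply/negP => lt_xy.
have : z %| y - x by rewrite -eqn_mod_dvd // exy.
by move/(dvdn_leq _); rewrite subn_gt0 => /(_ lt_xy); lia.
Qed.

Lemma dvdn_addmod (z x y : nat) : (z %| x + y) = (z %| x %% z + y %% z).
Proof. by rewrite /dvdn modnDm. Qed.

Section Slices.

Context {N : nat}.
Implicit Types (S : {set 'I_N}) (a b c : nat).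

Definition slice S a b : {set 'I_N} := [set x in S | a < x <= b].

Lemma in_slice S a b (x : 'I_N) : (x \in slice S a b) = (x \in S) && (a < x <= b).
Proof. by rewrite inE. Qed.

Lemma card_slice S a b : #|slice S a b| <= b - a.
Proof.
apply: (@card_le_injection _ _ (fun x : 'I_N => x - a.+1)) => [x y|x].
  by rewrite !in_slice => /and3P [_ ax _] /and3P [_ ay _] /= e; apply: val_inj => /=; lia.
by rewrite in_slice => /and3P [_ ax xb] /=; lia.
Qed.

Lemma card_slice_split S a b c :
  #|slice S a b| <= #|slice S a c| + #|slice S c b|.
Proof.
apply: leq_trans (leq_card_setU _ _); apply/subset_leq_card/subsetP => x.
by rewrite !inE; case: (x \in S) => //=; lia.
Qed.

(* Window bound: if z divides no sum of two elements of a window (a, a + z],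
   the window contains at most floor((z-1)/2) elements of S.  The residue
   r of such an element is neither 0 nor z/2, and r is determined by the
   value min(r, z - r) in [1, floor((z-1)/2)], since two residues with the
   same value are equal (then the elements coincide) or complementary. *)
Lemma card_window S a z :
  {in slice S a (a + z) &, forall x y : 'I_N, ~~ (z %| x + y)} ->
  #|slice S a (a + z)| <= z.-1 %/ 2.
Proof.
move=> nodvd; have [-> | z_gt0] := posnP z; first by have := card_slice S a (a + 0); lia.
have residue x : x \in slice S a (a + z) ->
    [/\ 0 < x %% z, x %% z < z & x %% z + x %% z != z].
  move=> xW; have := nodvd x x xW xW; rewrite dvdn_addmod ltn_pmod // => ndx.
  split => //; last by apply: contraNneq ndx => ->.
  by rewrite lt0n; apply: contraNneq ndx => ->.
apply: (@card_le_injection _ _ (fun x : 'I_N => (minn (x %% z) (z - x %% z)).-1)).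
  move=> x y xW yW e; have [x1 x2 x3] := residue x xW; have [y1 y2 y3] := residue y yW.
  have [same | compl] : x %% z = y %% z \/ x %% z + y %% z = z by lia.
    move: xW yW; rewrite !in_slice => /andP [_ hx] /andP [_ hy].
    by apply: val_inj; exact: (eq_mod_window hx hy same).
  by have := nodvd x y xW yW; rewrite dvdn_addmod compl dvdnn.
by move=> x /residue [x1 x2 x3]; lia.
Qed.

(* Pair bound: if no two elements of S in (t, n] (equal or not) sum to m,
   then S meets each pair {m - x, x} with (m - 1)/2 < x <= min(n, m - t - 1)
   at most once (and the middle singleton {m/2} not at all), so the slice has
   at most n - t minus the number of these pairs. *)
Lemma card_sum_free {S : {set 'I_N}} {t n m : nat} :
  {in slice S t n &, forall x y : 'I_N, x + y != m} ->
  #|slice S t n| + (minn n (m - t.+1) - m.-1 %/ 2) <= n - t.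
Proof.
move=> nosum; set hm := m.-1 %/ 2.
have hm_bounds : 2 * hm <= m.-1 <= 2 * hm + 1 by rewrite /hm; lia.
have [few_pairs | many_pairs] := leqP (minn n (m - t.+1)) hm.
  by have := card_slice S t n; lia.
suff : #|slice S t n| <= n - t - (minn n (m - t.+1) - hm) by lia.
(* x below m/2 keeps its position, x above m/2 whose partner m - x is in
   range takes the partner's position, and the remaining x are shifted down
   past the positions of the pairs. *)
pose g v := if 2 * v < m then v - t.+1
            else if t.+1 + v <= m then m - v - t.+1
            else v - t.+1 - (minn n (m - t.+1) - hm).
apply: (@card_le_injection _ _ (fun x : 'I_N => g x)) => [x y xS yS|x xS].
  have := nosum x x xS xS; have := nosum y y yS yS; have := nosum x y xS yS.
  move: xS yS; rewrite !in_slice => /and3P [_ tx xn] /and3P [_ ty yn] nxy ny nx e.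
  apply: val_inj => /=; move: e; rewrite /g.
  by case: ifP => c1; case: ifP => c2; try case: ifP => c3; try case: ifP => c4; lia.
have := nosum x x xS xS; move: xS; rewrite in_slice => /and3P [_ tx xn] nx.
by rewrite /g; case: ifP => c1; try case: ifP => c2; lia.
Qed.

End Slices.

Lemma propP_nodvd {n : nat} {A : {set 'I_n.+1}} {w x y : 'I_n.+1} :
  propP (natpred A) -> w \in A -> x \in A -> y \in A ->
  w < x -> w < y -> ~~ (w %| x + y).
Proof.
move=> HP wA xA yA wx wy; apply/negP => wxy; apply: HP.
have inA i : i \in A -> natpred A (val i) by move=> iA; apply/existsP; exists i; rewrite iA eqxx.
by exists x, y, w; split; rewrite ?inA.
Qed.

Section AboveMinimum.

Context {N : nat} {A : {set 'I_N}} {z n : nat}.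
Hypothesis nodvd : {in A &, forall x y : 'I_N, z < x -> z < y -> ~~ (z %| x + y)}.

Lemma window_above (a : nat) : z <= a -> #|slice A a (a + z)| <= z.-1 %/ 2.
Proof.
move=> za; apply: card_window => x y; rewrite !in_slice => /and3P [xA ax _] /and3P [yA ay _].
by apply: nodvd => //; lia.
Qed.

(* Bound 1: A is covered by {z}, the window A ∩ (z, 2z] and A ∩ (2z, n]. *)
Lemma card_above_min :
  A \subset slice A z.-1 n -> #|A| <= 1 + z.-1 %/ 2 + (n - (z + z)).
Proof.
move=> A_sub; apply: leq_trans (subset_leq_card A_sub) _.
apply: leq_trans (card_slice_split _ _ _ z) _; rewrite -addnA leq_add //.
  by have := card_slice A z.-1 z; lia.
apply: leq_trans (card_slice_split _ _ _ (z + z)) _.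
by rewrite leq_add ?window_above ?card_slice.
Qed.

(* Bound 2: for t >= z, A ∩ (t, n] is covered by the window A ∩ (t, t + z]
   and A ∩ (t + z, n]. *)
Lemma card_upper_slice {t : nat} :
  z <= t -> #|slice A t n| <= z.-1 %/ 2 + (n - t - z).
Proof.
move=> zt; rewrite -subnDA; apply: leq_trans (card_slice_split _ _ _ (t + z)) _.
by rewrite leq_add ?window_above ?card_slice.
Qed.

Lemma upper_slice_sum_free {t m : nat} :
  z <= t -> z %| m -> {in slice A t n &, forall x y : 'I_N, x + y != m}.
Proof.
move=> zt zm x y; rewrite !in_slice => /and3P [xA tx _] /and3P [yA ty _].
have zx : z < x by lia.
have zy : z < y by lia.
by apply: contraNneq (nodvd x y xA yA zx zy) => ->.
Qed.

End AboveMinimum.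

Lemma multiple_in_window {z : nat} (lo : nat) : 0 < z -> exists2 m, z %| m & lo <= m < lo + z.
Proof.
move=> z_gt0; exists ((lo + z.-1) %/ z * z); first exact: dvdn_mull.
have := leq_divM (lo + z.-1) z; have := ltn_ceil (lo + z.-1) z_gt0.
by rewrite mulSn; lia.
Qed.

(* The final contradiction: when bound 1 exceeds n - t, bound 2 and
   9k >= 2n + 12 force z <= 4k - 2(n - t) - 1, and then the multiples m of z
   in [2(t+1) + 2(n-t-k), ... + z) yield more than n - t - k pairs. *)
Lemma pair_count_large {n t k z m : nat} :
  3 * t <= 2 * n < 3 * t + 3 -> 2 * n + 12 <= 9 * k -> 0 < z -> z <= t -> k <= n - t ->
  n - t < 1 + z.-1 %/ 2 + (n - (z + z)) ->
  k <= z.-1 %/ 2 + (n - t - z) ->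
  2 * t.+1 + 2 * (n - t - k) <= m < 2 * t.+1 + 2 * (n - t - k) + z ->
  n - t < k + (minn n (m - t.+1) - m.-1 %/ 2).
Proof. lia. Qed.

Theorem mainTheorem9 (n : nat) (A : {set 'I_n.+1}) :
  subset_range A -> propP (natpred A) ->
  2 * n + 12 <= 9 * #|[set i in A | 2 * n < 3 * val i]| ->
  #|A| <= (n + 2) %/ 3.
Proof.
move=> A_pos HP.
set t := (2 * n) %/ 3; have t_bounds : 3 * t <= 2 * n < 3 * t + 3 by rewrite /t; lia.
have -> : (n + 2) %/ 3 = n - t by rewrite /t; lia.
have -> : [set i in A | 2 * n < 3 * val i] = slice A t n.
  by apply/setP => i; rewrite !inE; have := ltn_ord i; case: (i \in A) => //= /=; lia.
move=> k_large; have k_le := card_slice A t n; set k := #|slice A t n| in k_large k_le.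
have [-> | [x0 x0A]] := set_0Vmem A; first by rewrite cards0.
case: (arg_minnP (fun i : 'I_n.+1 => nat_of_ord i) x0A) => z zA z_min.
have z_pos : 0 < z := A_pos z zA.
have A_sub : A \subset slice A (nat_of_ord z).-1 n.
  by apply/subsetP => x xA; rewrite in_slice xA /=; have := z_min x xA; have := ltn_ord x; lia.
have [t_lt_z | z_le_t] := ltnP t z.
  apply: leq_trans (card_slice A t n); apply/subset_leq_card/subsetP => x /(subsetP A_sub).
  by rewrite !in_slice => /and3P [-> zx ->]; rewrite andbT; lia.
have nodvd : {in A &, forall x y : 'I_n.+1, z < x -> z < y -> ~~ (z %| x + y)}.
  by move=> x y xA yA; exact: propP_nodvd HP zA xA yA.
have [|too_big] := leqP #|A| (n - t); first by [].
have bound1 := card_above_min nodvd A_sub.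
have bound2 := card_upper_slice (n := n) nodvd z_le_t.
have [m zm m_range] := multiple_in_window (2 * t.+1 + 2 * (n - t - k)) z_pos.
have := card_sum_free (upper_slice_sum_free (n := n) nodvd z_le_t zm).
have := pair_count_large t_bounds k_large z_pos z_le_t k_le (leq_trans too_big bound1) bound2 m_range.
lia.
Qed.
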